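(* Let $X,Y$ be Polish spaces and $f\colon X\to Y$ continuous. Then $f$ is category-preserving if and only if the set of points of $X$ which are locally dense for $f$ is dense in $X$.
   Context: A continuous map $f\colon X\to Y$ between Polish spaces is category-preserving if $f^{-1}(A)$ is meager in $X$ for every meager $A\subseteq Y$ (equivalently, $f(U)$ is non-meager, or equivalently somewhere dense, for every nonempty open $U\subseteq X$). A point $x\in X$ is locally dense for $f$ if for every neighborhood $U$ of $x$ the set $\overline{f(U)}$ is a neighborhood of $f(x)$. *)

From HB Require Import structures.
From mathcomp Require Import all_boot all_order all_algebra.
From mathcomp Require Import all_classical all_reals all_analysis.
Set Implicit Arguments. Unset Strict Implicit. Unset Printing Implicit Defensive.
Import Order.TTheory GRing.Theory Num.Theory.
Local Open Scope classical_set_scope.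

Definition separable_space (T : topologicalType) : Prop :=
  exists2 D : set T, countable D & dense D.

(* A Polish space is rendered as a complete (pseudo)metric space which is
   Hausdorff (so the pseudometric is a genuine metric) and separable. *)
Definition polish_space (R : realType) (T : completePseudoMetricType R) : Prop :=
  hausdorff_space T /\ separable_space T.

Definition nowhere_dense (T : topologicalType) (A : set T) : Prop :=
  interior (closure A) = set0.

Definition meager (T : topologicalType) (A : set T) : Prop :=
  exists F : (set T)^nat, (forall n, nowhere_dense (F n)) /\ A `<=` \bigcup_n F n.

Definition category_preserving (X Y : topologicalType) (f : X -> Y) : Prop :=
  forall A : set Y, meager A -> meager (f @^-1` A).

Definition locally_dense_point (X Y : topologicalType) (f : X -> Y) (x : X) : Prop :=
  forall U : set X, nbhs x U -> nbhs (f x) (closure (f @` U)).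

Definition locally_dense_points (X Y : topologicalType) (f : X -> Y) : set X :=
  [set x | locally_dense_point f x].

From HB Require Import structures.
From mathcomp Require Import all_boot all_order all_algebra.
From mathcomp Require Import all_classical all_reals all_analysis.
Set Implicit Arguments. Unset Strict Implicit. Unset Printing Implicit Defensive.
Import Order.TTheory GRing.Theory Num.Theory.
Local Open Scope classical_set_scope.
Local Open Scope ring_scope.

(* If the locally dense points are dense and N is nowhere dense in Y, the
   closed set f^-1(cl N) has empty interior: a locally dense point x inside
   it would make cl f(U) a neighbourhood of f x contained in cl N.  Hence
   preimages of meager sets are meager.  Conversely, let (W_m) be a countable
   base of X.  The boundaries of the closed sets cl f(W_m) are nowhere dense,
   so their union M is meager, hence so is f^-1 M, and by the Baire category
   theorem its complement is dense.  If f x is outside M, then f x lies in the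
   interior of cl f(W_m) whenever x lies in W_m, so x is locally dense. *)

Lemma subset_dense (T : topologicalType) (A B : set T) :
  A `<=` B -> dense A -> dense B.
Proof.
move=> AB dA O O0 oO; have [x [Ox Ax]] := dA O O0 oO.
by exists x; split; [|exact: AB].
Qed.

Lemma nowhere_dense_closed_boundary (T : topologicalType) (K : set T) :
  closed K -> nowhere_dense (K `\` K°).
Proof.
move=> cK; rewrite /nowhere_dense -subset0 => y yI.
have clK : closure (K `\` K°) `<=` K.
  by rewrite [X in _ `<=` X](closure_id K).1 //; apply: closureS => z [].
have [z [[Kz nKz] Iz]] := interior_subset yI _ (nbhs_interior yI).
by case: nKz; exact: filterS clK Iz.
Qed.

Lemma dense_compl_closure (T : topologicalType) (N : set T) :
  nowhere_dense N -> dense (~` closure N).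
Proof.
move=> nN O O0 oO; apply/set0P/eqP => ON.
have : O `<=` (closure N)°.
  rewrite -open_subsetE // => x Ox; apply: contrapT => nx.
  by have : (O `&` ~` closure N) x by []; rewrite ON.
by rewrite nN subset0 => O_0; case: O0 => x; rewrite O_0.
Qed.

Lemma exists_natSinv_lt (R : archiRealFieldType) (e : R) :
  0 < e -> exists n : nat, n.+1%:R^-1 < e.
Proof.
move=> e0; have [N _ HN] := near_infty_natSinv_lt (PosNum e0).
by exists N; apply: HN => /=.
Qed.

Section Baire_pseudoMetric.
Variables (R : realType) (U : completePseudoMetricType R).

Lemma open_dense_ball_subset (G V : set U) (e : R) :
  open G -> dense G -> open V -> V !=set0 -> 0 < e ->
  exists a r, [/\ 0 < r, r < e & ball a (r + r) `<=` V `&` G].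
Proof.
move=> oG dG oV V0 e0.
have [x VGx] := dG V V0 oV.
have /nbhs_ballP[d /= d0 dVG] : nbhs x (V `&` G).
  by apply: open_nbhs_nbhs; split => //; exact: openI.
exists x, (Num.min (d / 2) (e / 2)); split.
- by rewrite lt_min !divr_gt0.
- by rewrite gt_min; apply/orP; right; rewrite ltr_pdivrMr // ltr_pMr ?ltr1n.
- move=> y /(le_ball _) xy; apply: dVG; apply: xy.
  by rewrite [leRHS]splitr lerD // ge_min lexx.
Qed.

Lemma nested_balls_cvg (a : nat -> U) (r : nat -> R) :
  (forall n, 0 < r n) -> (forall e, 0 < e -> exists n, r n < e) ->
  (forall n, ball (a n.+1) (r n.+1 + r n.+1) `<=` ball (a n) (r n)) ->
  exists l, forall n, ball (a n) (r n + r n) l.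
Proof.
move=> r_gt0 r_small nested.
have ball_nest n m : (n <= m)%N -> ball (a m) (r m) `<=` ball (a n) (r n).
  elim: m => [|m IH]; first by rewrite leqn0 => /eqP ->.
  rewrite leq_eqVlt => /orP[/eqP -> //|/IH]; apply: subset_trans.
  by move=> y /(le_ball _) y_m1; apply/nested/y_m1; rewrite lerDl ltW.
have a_in n m : (n <= m)%N -> ball (a n) (r n) (a m).
  by move=> nm; apply: ball_nest nm _ _; exact: ballxx.
have a_cvg : cvg (a @ \oo).
  apply: cauchy_cvg; apply: cauchy_exP => e e0.
  have [k rk_e] := r_small e e0.
  exists (a k), k => // m /= km.
  exact: le_ball (ltW rk_e) _ (a_in _ _ km).
exists (lim (a @ \oo)) => n.
have [N _ aN] := a_cvg _ (nbhsx_ballx (lim (a @ \oo)) _ (r_gt0 n)).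
apply: ball_triangle (a_in _ _ (leq_maxr N n)) _.
exact/ball_sym/aN/leq_maxl.
Qed.

Theorem complete_pseudoMetric_Baire (G : (set U)^nat) :
  (forall n, open (G n) /\ dense (G n)) -> dense (\bigcap_n G n).
Proof.
move=> odG D D0 oD.
(* Imposing nothing on nonpositive radii makes [step] total, so that
   [choice] yields the recursion step. *)
have step (p : nat * (U * R)) : exists q : U * R, 0 < p.2.2 ->
    [/\ 0 < q.2, q.2 < p.1.+1%:R^-1
      & ball q.1 (q.2 + q.2) `<=` ball p.2.1 p.2.2 `&` G p.1.+1].
  case: p => n [c s] /=; have [s0|_] := ltP 0 s; last by exists (c, s).
  have [||a' [r' [r'0 r'n sub]]] :=
    @open_dense_ball_subset (G n.+1) (ball c s)° n.+1%:R^-1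
      (odG n.+1).1 (odG n.+1).2 (@open_interior _ (ball c s)).
  - by exists c; exact: nbhsx_ballx.
  - by [].
  by exists (a', r') => _; split => // y /sub [/interior_subset].
have [g g_step] := choice step.
have [a0 [r0 [r0_gt0 _ sub0]]] :=
  open_dense_ball_subset (odG 0%N).1 (odG 0%N).2 oD D0 ltr01.
pose fix ar n := if n is m.+1 then g (m, ar m) else (a0, r0).
have r_gt0 n : 0 < (ar n).2.
  by elim: n => [//|n IH]; have [] := g_step (n, ar n) IH.
have ar_step n := g_step (n, ar n) (r_gt0 n).
have [l l_in] : exists l, forall n, ball (ar n).1 ((ar n).2 + (ar n).2) l.
  apply: nested_balls_cvg => // [e e0|n].
    have [k ke] := exists_natSinv_lt e0.
    by exists k.+1; have [_ + _] := ar_step k; move/lt_trans; apply.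
  by have [_ _ sub] := ar_step n => y /sub[].
exists l; split; first by have [] := sub0 _ (l_in 0%N).
case=> [_|n _]; first by have [] := sub0 _ (l_in 0%N).
by have [_ _ sub] := ar_step n; have [] := sub _ (l_in n.+1).
Qed.

Lemma dense_compl_meager (A : set U) : meager A -> dense (~` A).
Proof.
move=> [N [nN AN]].
have dN : dense (\bigcap_n ~` closure (N n)).
  apply: complete_pseudoMetric_Baire => n; split.
    exact/closed_openC/closed_closure.
  exact: dense_compl_closure.
apply: subset_dense dN => x Nx /AN[n _ Nnx].
exact: Nx n I (subset_closure Nnx).
Qed.

End Baire_pseudoMetric.

Lemma separable_countable_nbhs_base (R : realType) (X : pseudoPMetricType R) :
  separable_space X ->
  exists W : (set X)^nat, forall x V, nbhs x V -> exists2 m, W m x & W m `<=` V.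
Proof.
move=> [D cD dD]; have /pcard_surjP[g g_surj] := cD.
(* The balls of radius 1/(k+1) centred at the points g i of D, coded by
   m = pickle (i, k). *)
pose W m : set X := if choice.unpickle m is Some (i, k)
  then ball (g i) k.+1%:R^-1 else set0.
exists W => x V /nbhs_ballP[e /= e0 xeV].
have [k ke] := exists_natSinv_lt (divr_gt0 e0 (ltr0n R 2)).
have k_gt0 : 0 < k.+1%:R^-1 :> R by rewrite invr_gt0.
have [y [xky Dy]] := dD _ (ex_intro _ x (nbhsx_ballx x _ k_gt0))
  (@open_interior _ (ball x k.+1%:R^-1)).
have [i _ gi] := g_surj y Dy.
have Wik : W (choice.pickle (i, k)) = ball y k.+1%:R^-1.
  by rewrite /W choice.pickleK gi.
exists (choice.pickle (i, k)); rewrite Wik.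
  exact: ball_sym (interior_subset xky).
move=> z /(ball_triangle (interior_subset xky)) xz; apply/xeV/(le_ball _ xz).
by rewrite [leRHS]splitr lerD // ltW.
Qed.

Lemma locally_dense_point_off_boundaries (X Y : topologicalType) (f : X -> Y)
    (W : (set X)^nat) (x : X) :
  (forall V, nbhs x V -> exists2 m, W m x & W m `<=` V) ->
  (forall m, ~ (closure (f @` W m) `\` (closure (f @` W m))°) (f x)) ->
  locally_dense_point f x.
Proof.
move=> W_base fx_off V /W_base[m Wmx WmV].
have fx_int : (closure (f @` W m))° (f x).
  apply: contrapT => fx_bd; apply: (fx_off m); split => //.
  by apply: subset_closure; exists x.
by apply: filterS fx_int; apply/closureS/image_subset.
Qed.

Lemma category_preserving_dense_locally_dense (R : realType)
    (X : completePseudoMetricType R) (Y : topologicalType) (f : X -> Y) :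
  separable_space X -> category_preserving f -> dense (locally_dense_points f).
Proof.
move=> /separable_countable_nbhs_base[W W_base] cpf.
pose K m := closure (f @` W m).
have /cpf/dense_compl_meager : meager (\bigcup_m (K m `\` (K m)°)).
  exists (fun m => K m `\` (K m)°); split => // m.
  exact/nowhere_dense_closed_boundary/closed_closure.
apply: subset_dense => x fx_off.
apply: (locally_dense_point_off_boundaries (W_base x)) => m fx_bd.
by apply: fx_off; exists m.
Qed.

Lemma nowhere_dense_preimage_closure (X Y : topologicalType) (f : X -> Y)
    (N : set Y) :
  continuous f -> dense (locally_dense_points f) -> nowhere_dense N ->
  nowhere_dense (f @^-1` closure N).
Proof.
move=> cf dL nN.
have cl_fN : closed (f @^-1` closure N).
  exact: (continuous_closedP f).1 cf _ (@closed_closure _ N).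
rewrite /nowhere_dense -(closure_id _).1 // -subset0 => x0 x0_int.
have [x [x_int x_ld]] := dL _ (ex_intro _ x0 x0_int) (@open_interior _ _).
have fO_N : closure (f @` (f @^-1` closure N)°) `<=` closure N.
  rewrite [X in _ `<=` X](closure_id _).1; last exact: closed_closure.
  by apply/closureS => _ [y /interior_subset Ny <-].
have : (closure N)° (f x).
  exact: filterS fO_N (x_ld _ (nbhs_interior x_int)).
by rewrite nN.
Qed.

Lemma dense_locally_dense_category_preserving (X Y : topologicalType)
    (f : X -> Y) :
  continuous f -> dense (locally_dense_points f) -> category_preserving f.
Proof.
move=> cf dL A [N [nN AN]].
exists (fun n => f @^-1` closure (N n)); split.
  by move=> n; exact: nowhere_dense_preimage_closure.
by move=> x /AN[n _ Nnx]; exists n => //; exact: subset_closure.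
Qed.

Theorem mainTheorem7 (R : realType) (X Y : completePseudoMetricType R)
  (polX : polish_space X) (polY : polish_space Y)
  (f : X -> Y) (cf : continuous f) :
  category_preserving f <-> dense (locally_dense_points f).
Proof.
split; last exact: dense_locally_dense_category_preserving.
exact: category_preserving_dense_locally_dense polX.2.
Qed.
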